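(* Let $G$ be a finitely presented group which does not contain a subgroup isomorphic to the free group $F_2$ of rank $2$. Then $\operatorname{rg}(G,\phi)=0$ for every primitive class $\phi\in H^1(G;\mathbb{Z})$.
   Context: A class $\phi\in H^1(G;\mathbb{Z})=\operatorname{Hom}(G,\mathbb{Z})$ is primitive if it is surjective. For a group $H$, $\operatorname{rk}(H)$ is the minimal number of generators. For finitely generated $G$ and primitive $\phi$, with $G_i=\operatorname{Ker}(G\xrightarrow{\phi}\mathbb{Z}\to\mathbb{Z}/i)$, the rank gradient is $\operatorname{rg}(G,\phi)=\liminf_{i\to\infty}\frac{\operatorname{rk}(G_i)}{[G:G_i]}$. *)

From Stdlib Require Import Reals ZArith List.
Import ListNotations.

Record Group := {
  carrier :> Type;
  gmul : carrier -> carrier -> carrier;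
  ginv : carrier -> carrier;
  gone : carrier;
  gmul_assoc : forall x y z, gmul x (gmul y z) = gmul (gmul x y) z;
  gmul_1l : forall x, gmul gone x = x;
  gmul_Vl : forall x, gmul (ginv x) x = gone
}.

Arguments gmul {_}. Arguments ginv {_}. Arguments gone {_}.

(* A letter (k, false) is the generator x_k, (k, true) is x_k^{-1}. *)
Definition letter := (nat * bool)%type.
Definition word := list letter.

Definition letter_inv (l : letter) : letter := (fst l, negb (snd l)).

Fixpoint eval_word {G : Group} (g : nat -> G) (w : word) : G :=
  match w with
  | [] => gone
  | (k, false) :: w' => gmul (g k) (eval_word g w')
  | (k, true) :: w' => gmul (ginv (g k)) (eval_word g w')
  end.

Definition word_on (n : nat) (w : word) : Prop :=
  forall l, In l w -> (fst l < n)%nat.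

Fixpoint reduced (w : word) : Prop :=
  match w with
  | [] => True
  | l :: w' =>
      match w' with
      | [] => True
      | l' :: _ => l' <> letter_inv l /\ reduced w'
      end
  end.

(* The free group F_2 is the group of reduced words on x_0, x_1.  A
   homomorphism F_2 -> G is determined by the images a, b of x_0, x_1 and
   sends a reduced word w to eval_word [a;b] w; it is injective iff no
   nonempty reduced word is sent to 1.  G contains a subgroup isomorphic to
   F_2 iff some such homomorphism is injective. *)
Definition contains_F2 (G : Group) : Prop :=
  exists a b : G,
    forall w : word, word_on 2 w -> reduced w -> w <> [] ->
      eval_word (fun k => if Nat.eqb k 0 then a else b) w <> gone.

(* Equivalence on words generated by free reductions and insertion of
   relators (and inverse relators); w ~ [] iff w lies in the normal
   closure of R in the free group. *)
Definition word_inv (w : word) : word := rev (map letter_inv w).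

Inductive pres_equiv (R : list word) : word -> word -> Prop :=
  | pe_refl : forall w, pres_equiv R w w
  | pe_sym : forall u v, pres_equiv R u v -> pres_equiv R v u
  | pe_trans : forall u v t, pres_equiv R u v -> pres_equiv R v t -> pres_equiv R u t
  | pe_free : forall u v l, pres_equiv R (u ++ v) (u ++ l :: letter_inv l :: v)
  | pe_rel : forall u v r, In r R -> pres_equiv R (u ++ v) (u ++ r ++ v).

(* G is isomorphic to < x_0, ..., x_{n-1} | R > via x_k |-> g k:
   the map from words to G is surjective, kills the relators,
   and its kernel is exactly the normal closure of R. *)
Definition finitely_presented (G : Group) : Prop :=
  exists (n : nat) (g : nat -> G) (R : list word),
    (forall r, In r R -> word_on n r) /\
    (forall x : G, exists w, word_on n w /\ eval_word g w = x) /\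
    (forall r, In r R -> eval_word g r = gone) /\
    (forall w, word_on n w -> eval_word g w = gone -> pres_equiv R w []).

Definition is_hom_Z (G : Group) (phi : G -> Z) : Prop :=
  forall x y : G, phi (gmul x y) = (phi x + phi y)%Z.

Definition primitive_class (G : Group) (phi : G -> Z) : Prop :=
  is_hom_Z G phi /\ forall z : Z, exists x : G, phi x = z.

(* G_i = Ker(G --phi--> Z --> Z/i) *)
Definition Gi (G : Group) (phi : G -> Z) (i : nat) : G -> Prop :=
  fun x => (Z.of_nat i | phi x)%Z.

Definition rank_le (G : Group) (H : G -> Prop) (n : nat) : Prop :=
  exists L : list G,
    (length L <= n)%nat /\
    (forall x, In x L -> H x) /\
    (forall x, H x -> exists w, word_on (length L) w /\
                     eval_word (fun k => nth k L gone) w = x).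

(* rg(G,phi) = liminf_i rk(G_i)/[G:G_i] = 0.  For primitive phi,
   [G:G_i] = i.  Since the terms are >= 0, liminf = 0 iff for every
   eps > 0 and every N there is i >= N with rk(G_i)/i < eps, i.e. some
   n with rk(G_i) <= n and n < eps * i. *)
Definition rank_gradient_zero (G : Group) (phi : G -> Z) : Prop :=
  forall (eps : R) (N : nat), (0 < eps)%R ->
    exists (i n : nat), (N <= i)%nat /\ (1 <= i)%nat /\
      rank_le G (Gi G phi i) n /\ (INR n < eps * INR i)%R.

(* Write G = <g_0, ..., g_(n-1) | R>, choose t with phi t = 1 and put a_j = g_j t^-(phi g_j), so
   that ker phi is generated by the conjugates t^k a_j t^-k.  Let K bound the total variation of
   phi along the relators and along a word for t, and let A (resp. B) be generated by these
   conjugates with -K <= k < K (resp. -K <= k <= K).  In the HNN extension H of G whose stable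
   letter T conjugates A onto t A t^-1 as t does, g_j |-> a_j T^(phi g_j) defines a homomorphism
   G -> H: along a relator the exponent of T stays in [-K, K], where T acts on the conjugates of
   the a_j like t.  If B contained p outside t A t^-1 and q outside A, ping-pong on normal forms
   in H would make p t and q t^-1 a free basis of a subgroup of G.  Hence B lies in A or in t A t^-1,
   so conjugation by t or by t^-1 maps B into itself, and G_i is generated by t^i together with the
   n (2K + 1) generators of B: the rank of G_i is bounded while its index i grows. *)

From Stdlib Require Import Reals ZArith List Lia Lra.
From Stdlib Require Import ClassicalEpsilon FunctionalExtensionality PropExtensionality.
From Stdlib Require Import ProofIrrelevance Classical.
Import ListNotations.
Open Scope Z_scope.

Section GroupTheory.
Variable G : Group.
Local Infix "**" := (@gmul G) (at level 40, left associativity).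

Lemma gmul_Vr (x : G) : x ** ginv x = gone.
Proof.
  rewrite <- (gmul_1l _ (x ** ginv x)), <- (gmul_Vl _ (ginv x)) at 1.
  rewrite <- gmul_assoc, (gmul_assoc _ (ginv x) x (ginv x)), gmul_Vl, gmul_1l.
  apply gmul_Vl.
Qed.

Lemma gmul_1r (x : G) : x ** gone = x.
Proof. rewrite <- (gmul_Vl _ x), gmul_assoc, gmul_Vr, gmul_1l. reflexivity. Qed.

Lemma gmulKV (x y : G) : ginv x ** (x ** y) = y.
Proof. rewrite gmul_assoc, gmul_Vl, gmul_1l. reflexivity. Qed.

Lemma gmulVK (x y : G) : x ** (ginv x ** y) = y.
Proof. rewrite gmul_assoc, gmul_Vr, gmul_1l. reflexivity. Qed.

Lemma gmul_cancel_l (x y z : G) : x ** y = x ** z -> y = z.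
Proof. intro E. rewrite <- (gmulKV x y), E, gmulKV. reflexivity. Qed.

Lemma ginv_uniq (x y : G) : x ** y = gone -> y = ginv x.
Proof. intro E. apply (gmul_cancel_l x). rewrite E, gmul_Vr. reflexivity. Qed.

Lemma ginv_ginv (x : G) : ginv (ginv x) = x.
Proof. symmetry. apply ginv_uniq, gmul_Vl. Qed.

Lemma ginv_mul (x y : G) : ginv (x ** y) = ginv y ** ginv x.
Proof.
  symmetry. apply ginv_uniq.
  rewrite <- gmul_assoc, (gmul_assoc _ y), gmul_Vr, gmul_1l, gmul_Vr. reflexivity.
Qed.

Lemma ginv_one : ginv (@gone G) = gone.
Proof. symmetry. apply ginv_uniq, gmul_1l. Qed.

Lemma gmulV_eq1 (x y : G) : x ** ginv y = gone -> x = y.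
Proof. intro E. apply ginv_uniq in E. rewrite <- (ginv_ginv x), <- E, ginv_ginv. reflexivity. Qed.

End GroupTheory.

Ltac gsimpl :=
  repeat (rewrite <- ?gmul_assoc;
          rewrite ?gmul_1l, ?gmul_1r, ?ginv_mul, ?ginv_ginv, ?ginv_one,
                  ?gmul_Vl, ?gmul_Vr, ?gmulKV, ?gmulVK).

Ltac gsimpl_in H :=
  repeat (rewrite <- ?gmul_assoc in H;
          rewrite ?gmul_1l, ?gmul_1r, ?ginv_mul, ?ginv_ginv, ?ginv_one,
                  ?gmul_Vl, ?gmul_Vr, ?gmulKV, ?gmulVK in H).

Section Powers.
Variable G : Group.
Local Infix "**" := (@gmul G) (at level 40, left associativity).

Fixpoint npow (x : G) (n : nat) : G :=
  match n with O => gone | S n => x ** npow x n end.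

Definition zpow (x : G) (z : Z) : G :=
  if Z.leb 0 z then npow x (Z.to_nat z) else npow (ginv x) (Z.to_nat (- z)).

Lemma zpow0 x : zpow x 0 = gone.
Proof. reflexivity. Qed.

Lemma zpow_succ x z : zpow x (z + 1) = x ** zpow x z.
Proof.
  unfold zpow. destruct (Z.leb_spec 0 z), (Z.leb_spec 0 (z + 1)); try lia.
  - replace (Z.to_nat (z + 1)) with (S (Z.to_nat z)) by lia. reflexivity.
  - replace z with (-1) by lia. simpl. gsimpl. reflexivity.
  - replace (Z.to_nat (- z)) with (S (Z.to_nat (- (z + 1)))) by lia. simpl. gsimpl. reflexivity.
Qed.

Lemma zpow_pred x z : zpow x (z - 1) = ginv x ** zpow x z.
Proof. replace z with ((z - 1) + 1) at 2 by lia. rewrite zpow_succ. gsimpl. reflexivity. Qed.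

Lemma zpow_add x a b : zpow x (a + b) = zpow x a ** zpow x b.
Proof.
  induction a using Z.peano_ind.
  - rewrite zpow0, gmul_1l. reflexivity.
  - replace (Z.succ a + b) with ((a + b) + 1) by lia. unfold Z.succ.
    rewrite !zpow_succ, IHa. gsimpl. reflexivity.
  - replace (Z.pred a + b) with ((a + b) - 1) by lia.
    replace (Z.pred a) with (a - 1) by lia.
    rewrite !zpow_pred, IHa. gsimpl. reflexivity.
Qed.

Lemma zpow1 x : zpow x 1 = x.
Proof. change 1 with (0 + 1). rewrite zpow_succ, zpow0, gmul_1r. reflexivity. Qed.

Lemma zpow_opp x z : zpow x (- z) = ginv (zpow x z).
Proof. apply ginv_uniq. rewrite <- zpow_add, Z.add_opp_diag_r. reflexivity. Qed.

Lemma zpow_mul x a b : zpow x (a * b) = zpow (zpow x a) b.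
Proof.
  induction b using Z.peano_ind.
  - rewrite Z.mul_0_r. reflexivity.
  - replace (a * Z.succ b) with (a + a * b) by lia. unfold Z.succ.
    rewrite zpow_add, zpow_succ, IHb. reflexivity.
  - replace (a * Z.pred b) with (- a + a * b) by lia. replace (Z.pred b) with (b - 1) by lia.
    rewrite zpow_add, zpow_pred, IHb, zpow_opp. reflexivity.
Qed.

End Powers.
Arguments npow {G}. Arguments zpow {G}.

Section Homomorphisms.
Variables G H : Group.
Variable f : G -> H.
Hypothesis fM : forall x y, f (gmul x y) = gmul (f x) (f y).

Lemma hom1 : f gone = gone.
Proof. apply (gmul_cancel_l _ (f gone)). rewrite <- fM, !gmul_1r. reflexivity. Qed.

Lemma homV x : f (ginv x) = ginv (f x).
Proof. apply ginv_uniq. rewrite <- fM, gmul_Vr. apply hom1. Qed.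

End Homomorphisms.

Section HomomorphismsToZ.
Variable G : Group.
Variable phi : G -> Z.
Hypothesis phiM : forall x y, phi (gmul x y) = phi x + phi y.

Lemma phi1 : phi gone = 0.
Proof. assert (E := phiM gone gone). rewrite gmul_1l in E. lia. Qed.

Lemma phiV x : phi (ginv x) = - phi x.
Proof. assert (E := phiM (ginv x) x). rewrite gmul_Vl, phi1 in E. lia. Qed.

Lemma phi_zpow x z : phi (zpow x z) = z * phi x.
Proof.
  induction z using Z.peano_ind.
  - rewrite zpow0, phi1. lia.
  - unfold Z.succ. rewrite zpow_succ, phiM, IHz. lia.
  - replace (Z.pred z) with (z - 1) by lia. rewrite zpow_pred, phiM, IHz, phiV. lia.
Qed.

End HomomorphismsToZ.

Section Words.
Variable G : Group.
Variable f : nat -> G.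

Definition lval (l : letter) : G := if snd l then ginv (f (fst l)) else f (fst l).

Lemma eval_cons l w : eval_word f (l :: w) = gmul (lval l) (eval_word f w).
Proof. destruct l as [k []]; reflexivity. Qed.

Lemma eval_app u v : eval_word f (u ++ v) = gmul (eval_word f u) (eval_word f v).
Proof.
  induction u as [|l u IH].
  - simpl. rewrite gmul_1l. reflexivity.
  - rewrite <- app_comm_cons, !eval_cons, IH, gmul_assoc. reflexivity.
Qed.

Lemma lval_inv l : lval (letter_inv l) = ginv (lval l).
Proof. destruct l as [k []]; unfold lval; simpl; gsimpl; reflexivity. Qed.

Lemma eval_inv w : eval_word f (word_inv w) = ginv (eval_word f w).
Proof.
  induction w as [|l w IH].
  - simpl. rewrite ginv_one. reflexivity.
  - unfold word_inv. cbn [map rev]. rewrite eval_app. fold (word_inv w).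
    rewrite IH, !eval_cons, lval_inv. simpl. gsimpl. reflexivity.
Qed.

Fixpoint nrep (w : word) (n : nat) : word :=
  match n with O => [] | S n => w ++ nrep w n end.

Definition wpow (w : word) (z : Z) : word :=
  if Z.leb 0 z then nrep w (Z.to_nat z) else nrep (word_inv w) (Z.to_nat (- z)).

Lemma eval_nrep w n : eval_word f (nrep w n) = npow (eval_word f w) n.
Proof. induction n; simpl; [|rewrite eval_app, IHn]; reflexivity. Qed.

Lemma eval_wpow w z : eval_word f (wpow w z) = zpow (eval_word f w) z.
Proof. unfold wpow, zpow. destruct (Z.leb 0 z); rewrite eval_nrep, ?eval_inv; reflexivity. Qed.

Definition wsubst (u : nat -> word) (W : word) : word :=
  flat_map (fun l : letter => if snd l then word_inv (u (fst l)) else u (fst l)) W.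

Lemma eval_wsubst u W :
  eval_word f (wsubst u W) = eval_word (fun k => eval_word f (u k)) W.
Proof.
  induction W as [|[k b] W IH]; simpl; [reflexivity|].
  rewrite eval_app, IH. destruct b; rewrite ?eval_inv; reflexivity.
Qed.

Lemma eval_pres_equiv R :
  (forall r, In r R -> eval_word f r = gone) ->
  forall u v, pres_equiv R u v -> eval_word f u = eval_word f v.
Proof.
  intros Hr u v. induction 1; try congruence.
  - rewrite !eval_app, !eval_cons, lval_inv, gmulVK. reflexivity.
  - rewrite !eval_app, (Hr r), gmul_1l by assumption. reflexivity.
Qed.

End Words.
Arguments lval {G}. Arguments nrep : clear implicits. Arguments wpow : clear implicits.

Lemma eval_ext (G : Group) (f f' : nat -> G) w :
  (forall k, f k = f' k) -> eval_word f w = eval_word f' w.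
Proof. intro E. induction w as [|[k []] w IH]; simpl; rewrite ?E, ?IH; reflexivity. Qed.

Lemma word_on_nil n : word_on n [].
Proof. intros l []. Qed.

Lemma word_on_cons n l w : (fst l < n)%nat -> word_on n w -> word_on n (l :: w).
Proof. intros Hl Hw l' [<-|H]; auto. Qed.

Lemma word_on_consE n l w : word_on n (l :: w) -> (fst l < n)%nat /\ word_on n w.
Proof. intro H. split; [apply H; left | intros l' Hl'; apply H; right]; auto. Qed.

Lemma word_on_app n u v : word_on n u -> word_on n v -> word_on n (u ++ v).
Proof. intros Hu Hv l Hl. apply in_app_or in Hl. destruct Hl; auto. Qed.

Lemma word_on_inv n u : word_on n u -> word_on n (word_inv u).
Proof.
  intros Hu l Hl. apply in_rev, in_map_iff in Hl. destruct Hl as [x [<- Hx]]. apply (Hu x Hx).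
Qed.

Lemma word_on_wpow n u z : word_on n u -> word_on n (wpow u z).
Proof.
  intro Hu. assert (Hrep : forall v m, word_on n v -> word_on n (nrep v m)).
  { intros v m Hv. induction m; simpl; auto using word_on_nil, word_on_app. }
  unfold wpow. destruct (Z.leb 0 z); auto using word_on_inv.
Qed.

Lemma word_on_wsubst n (u : nat -> word) W :
  (forall k, word_on n (u k)) -> word_on n (wsubst u W).
Proof.
  intro H. induction W as [|[k b] W IH]; simpl; [apply word_on_nil|].
  apply word_on_app; auto. destruct b; auto using word_on_inv.
Qed.

Lemma presentation_transfer (G H : Group) (g : nat -> G) (h : nat -> H) (n : nat) (R : list word) :
  (forall w, word_on n w -> eval_word g w = gone -> pres_equiv R w []) ->
  (forall r, In r R -> eval_word h r = gone) ->
  forall u v, word_on n u -> word_on n v ->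
    eval_word g u = eval_word g v -> eval_word h u = eval_word h v.
Proof.
  intros Hpres Hrel u v Hu Hv E.
  assert (Huv : pres_equiv R (u ++ word_inv v) []).
  { apply Hpres. { apply word_on_app; auto using word_on_inv. }
    rewrite eval_app, eval_inv, E, gmul_Vr. reflexivity. }
  apply (eval_pres_equiv _ h) in Huv; auto.
  rewrite eval_app, eval_inv in Huv. apply gmulV_eq1. exact Huv.
Qed.

Record perm (X : Type) := mkperm {
  pf : X -> X; pg : X -> X;
  pfg : forall x, pf (pg x) = x; pgf : forall x, pg (pf x) = x }.
Arguments pf {X}. Arguments pg {X}.

Lemma perm_ext X (p q : perm X) : (forall x, pf p x = pf q x) -> p = q.
Proof.
  intros E. destruct p as [f1 g1 a1 b1], q as [f2 g2 a2 b2]; simpl in *.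
  assert (f1 = f2) by (apply functional_extensionality; auto). subst f2.
  assert (g1 = g2).
  { apply functional_extensionality. intro x. rewrite <- (a2 x) at 1. rewrite b1. reflexivity. }
  subst g2. f_equal; apply proof_irrelevance.
Qed.

Section SymmetricGroup.
Variable X : Type.

Definition pmul (p q : perm X) : perm X.
Proof.
  refine (mkperm X (fun x => pf p (pf q x)) (fun x => pg q (pg p x)) _ _);
    intro x; rewrite ?pfg, ?pgf; reflexivity.
Defined.

Definition pinv (p : perm X) : perm X := mkperm X (pg p) (pf p) (pgf X p) (pfg X p).

Definition pone : perm X := mkperm X (fun x => x) (fun x => x) (fun _ => eq_refl) (fun _ => eq_refl).

Definition Sym : Group.
Proof.
  refine (Build_Group (perm X) pmul pinv pone _ _ _); intros; apply perm_ext; try reflexivity.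
  intro. apply pgf.
Defined.

Lemma Sym_pf_mul (p q : Sym) x : pf (gmul p q) x = pf p (pf q x).
Proof. reflexivity. Qed.

End SymmetricGroup.

Lemma sig_eq {T} {P : T -> Prop} (x y : {a | P a}) : proj1_sig x = proj1_sig y -> x = y.
Proof. destruct x, y; simpl; intros; subst; f_equal; apply proof_irrelevance. Qed.

Inductive gen {G : Group} (S : G -> Prop) : G -> Prop :=
| gen1 : gen S gone
| genM s x : S s -> gen S x -> gen S (gmul s x)
| genVM s x : S s -> gen S x -> gen S (gmul (ginv s) x).

Section GeneratedSubgroup.
Variable G : Group.

Lemma gen_incl (S : G -> Prop) x : S x -> gen S x.
Proof. intro. rewrite <- gmul_1r. apply genM; auto. constructor. Qed.

Lemma gen_mul (S : G -> Prop) x y : gen S x -> gen S y -> gen S (gmul x y).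
Proof.
  induction 1; intros.
  - rewrite gmul_1l; auto.
  - rewrite <- gmul_assoc; apply genM; auto.
  - rewrite <- gmul_assoc; apply genVM; auto.
Qed.

Lemma gen_inv (S : G -> Prop) x : gen S x -> gen S (ginv x).
Proof.
  induction 1.
  - rewrite ginv_one; constructor.
  - rewrite ginv_mul. apply gen_mul; auto. rewrite <- gmul_1r. apply genVM; auto; constructor.
  - rewrite ginv_mul, ginv_ginv. apply gen_mul; auto. apply gen_incl; auto.
Qed.

Lemma gen_zpow (S : G -> Prop) x q : gen S x -> gen S (zpow x q).
Proof.
  intro Hx. induction q using Z.peano_ind.
  - rewrite zpow0. constructor.
  - unfold Z.succ. rewrite zpow_succ. apply gen_mul; auto.
  - replace (Z.pred q) with (q - 1) by lia. rewrite zpow_pred.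
    apply gen_mul; auto. apply gen_inv; auto.
Qed.

Lemma gen_sub (S S' : G -> Prop) :
  (forall x, S x -> gen S' x) -> forall x, gen S x -> gen S' x.
Proof.
  intros H x. induction 1; [constructor| |]; apply gen_mul; auto. apply gen_inv; auto.
Qed.

Lemma gen_conj (S : G -> Prop) (c : G) x : gen S x ->
  gen (fun y => exists s, S s /\ y = gmul (gmul c s) (ginv c)) (gmul (gmul c x) (ginv c)).
Proof.
  induction 1.
  - rewrite gmul_1r, gmul_Vr. constructor.
  - replace (gmul (gmul c (gmul s x)) (ginv c))
      with (gmul (gmul (gmul c s) (ginv c)) (gmul (gmul c x) (ginv c))) by (gsimpl; reflexivity).
    apply genM; eauto.
  - replace (gmul (gmul c (gmul (ginv s) x)) (ginv c))
      with (gmul (ginv (gmul (gmul c s) (ginv c))) (gmul (gmul c x) (ginv c))) by (gsimpl; reflexivity).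
    apply genVM; eauto.
Qed.

Lemma gen_list_word (L : list G) x : gen (fun y => In y L) x ->
  exists w, word_on (length L) w /\ eval_word (fun k => nth k L gone) w = x.
Proof.
  induction 1 as [|s x Hs _ [w [Ow Ew]]|s x Hs _ [w [Ow Ew]]].
  - exists []. split; [apply word_on_nil | reflexivity].
  - apply In_nth with (d := gone) in Hs. destruct Hs as [k [Hk Ek]].
    exists ((k, false) :: w). split; [apply word_on_cons; auto|]. simpl. rewrite Ew, Ek. reflexivity.
  - apply In_nth with (d := gone) in Hs. destruct Hs as [k [Hk Ek]].
    exists ((k, true) :: w). split; [apply word_on_cons; auto|]. simpl. rewrite Ew, Ek. reflexivity.
Qed.

End GeneratedSubgroup.

(** * Normal forms for an HNN extension of G *)

Section HNNNormalForms.
Variable G : Group.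
Variable t : G.
Variable A : G -> Prop.
Hypothesis A1 : A gone.
Hypothesis AM : forall x y, A x -> A y -> A (gmul x y).
Hypothesis AV : forall x, A x -> A (ginv x).

Definition assoc (b : bool) : G -> Prop :=
  if b then fun x => A (gmul (gmul (ginv t) x) t) else A.

Definition tconj (b : bool) (y : G) : G :=
  if b then gmul (gmul (ginv t) y) t else gmul (gmul t y) (ginv t).

Lemma assoc1 b : assoc b gone.
Proof. destruct b; simpl; gsimpl; auto. Qed.

Lemma assocM b x y : assoc b x -> assoc b y -> assoc b (gmul x y).
Proof.
  destruct b; simpl; auto. intros Hx Hy.
  replace (gmul (gmul (ginv t) (gmul x y)) t)
    with (gmul (gmul (gmul (ginv t) x) t) (gmul (gmul (ginv t) y) t)) by (gsimpl; reflexivity).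
  auto.
Qed.

Lemma assocV b x : assoc b x -> assoc b (ginv x).
Proof.
  destruct b; simpl; auto. intro Hx.
  replace (gmul (gmul (ginv t) (ginv x)) t) with (ginv (gmul (gmul (ginv t) x) t))
    by (gsimpl; reflexivity).
  auto.
Qed.

Lemma assoc_of_mul_l b x y : assoc b x -> assoc b (gmul x y) -> assoc b y.
Proof.
  intros Hx Hxy. replace y with (gmul (ginv x) (gmul x y)) by (gsimpl; reflexivity).
  apply assocM; auto using assocV.
Qed.

Lemma assoc_of_ldiv b x y : assoc b x -> assoc b (gmul (ginv y) x) -> assoc b y.
Proof.
  intros Hx Hyx. replace y with (gmul x (ginv (gmul (ginv y) x))) by (gsimpl; reflexivity).
  apply assocM; auto using assocV.
Qed.

Lemma tconjM b x y : tconj b (gmul x y) = gmul (tconj b x) (tconj b y).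
Proof. destruct b; simpl; gsimpl; reflexivity. Qed.

Lemma tconjK b x : tconj (negb b) (tconj b x) = x.
Proof. destruct b; simpl; gsimpl; reflexivity. Qed.

Lemma assoc_tconj b a : assoc b a -> assoc (negb b) (tconj b a).
Proof. destruct b; simpl; auto. intros. gsimpl. auto. Qed.

Definition is_coset_rep (b : bool) (g r : G) : Prop :=
  assoc b (gmul g (ginv r)) /\ (assoc b g -> r = gone).

Definition coset_rep (b : bool) (g : G) : G := epsilon (inhabits gone) (is_coset_rep b g).

Lemma coset_rep_spec b g : is_coset_rep b g (coset_rep b g).
Proof.
  unfold coset_rep. apply epsilon_spec. destruct (classic (assoc b g)) as [Hg|Hg].
  - exists gone. split; auto. rewrite ginv_one, gmul_1r. auto.
  - exists g. split; [rewrite gmul_Vr; apply assoc1 | tauto].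
Qed.

(* Both cosets have the same set of representatives, so [epsilon] makes the same choice. *)
Lemma coset_rep_mul b a g : assoc b a -> coset_rep b (gmul a g) = coset_rep b g.
Proof.
  intro Ha. unfold coset_rep. f_equal. apply functional_extensionality. intro r.
  apply propositional_extensionality. unfold is_coset_rep.
  split; intros [H1 H2]; split; rewrite <- ?gmul_assoc in *.
  - apply (assoc_of_mul_l b a); auto.
  - intro. apply H2, assocM; auto.
  - apply assocM; auto.
  - intro. apply H2, (assoc_of_mul_l b a); auto.
Qed.

Lemma coset_rep_eq1 b g : coset_rep b g = gone <-> assoc b g.
Proof.
  destruct (coset_rep_spec b g) as [H1 H2]. split; auto.
  intro E. rewrite E, ginv_one, gmul_1r in H1. auto.
Qed.

Lemma coset_rep_idem b g : coset_rep b (coset_rep b g) = coset_rep b g.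
Proof.
  set (r := coset_rep b g).
  replace r with (gmul (ginv (gmul g (ginv r))) g) at 1 by (gsimpl; reflexivity).
  apply coset_rep_mul, assocV, coset_rep_spec.
Qed.

(* A normal form [(g, [(b1, r1); ...; (bk, rk)])] stands for [g T^e1 r1 ... T^ek rk], where
   [T] is the stable letter, with [T a T^-1 = t a t^-1] for [a] in [A], [ei = 1] if
   [bi = false] and [ei = -1] if [bi = true], and each [ri] is a coset representative for
   [assoc bi]. *)
Definition nf := (G * list (bool * G))%type.

Fixpoint nf_valid (l : list (bool * G)) : Prop :=
  match l with
  | [] => True
  | (b, r) :: l' => coset_rep b r = r /\
      (r = gone -> match l' with [] => True | (b', _) :: _ => b' = b end) /\ nf_valid l'
  end.

Definition cancels (b : bool) (x : nf) : Prop :=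
  coset_rep b (fst x) = gone /\ exists g1 l', snd x = (negb b, g1) :: l'.

Definition stable_act (b : bool) (x : nf) : nf :=
  if excluded_middle_informative (cancels b x) then
    match snd x with (_, g1) :: l' => (gmul (tconj b (fst x)) g1, l') | [] => x end
  else (tconj b (gmul (fst x) (ginv (coset_rep b (fst x)))), (b, coset_rep b (fst x)) :: snd x).

Lemma stable_act_cancel b g0 g1 l' :
  assoc b g0 -> stable_act b (g0, (negb b, g1) :: l') = (gmul (tconj b g0) g1, l').
Proof.
  intro H. unfold stable_act. destruct excluded_middle_informative as [_|C]; [reflexivity|].
  exfalso. apply C. split; [apply coset_rep_eq1; auto | simpl; eauto].
Qed.

Lemma stable_act_extend b x : ~ cancels b x ->
  stable_act b x =
  (tconj b (gmul (fst x) (ginv (coset_rep b (fst x)))), (b, coset_rep b (fst x)) :: snd x).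
Proof. intro H. unfold stable_act. destruct excluded_middle_informative; tauto. Qed.

Lemma stable_act_valid b x : nf_valid (snd x) -> nf_valid (snd (stable_act b x)).
Proof.
  destruct x as [g0 l]. simpl. intro V. destruct (classic (cancels b (g0, l))) as [C|C].
  - destruct C as [C1 [g1 [l' E]]]. simpl in *. subst l.
    apply coset_rep_eq1 in C1. rewrite stable_act_cancel by auto. simpl in *. tauto.
  - rewrite stable_act_extend by auto. simpl. split; [apply coset_rep_idem|]. split; auto.
    intro E. destruct l as [|[b' g1] l']; auto.
    destruct (Bool.bool_dec b' b); auto. exfalso. apply C. split; simpl; auto.
    exists g1, l'. destruct b, b'; simpl in *; congruence.
Qed.

Lemma stable_act_inv b x : nf_valid (snd x) -> stable_act (negb b) (stable_act b x) = x.
Proof.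
  destruct x as [g0 l]. simpl. intro V. destruct (classic (cancels b (g0, l))) as [C|C].
  - destruct C as [C1 [g1 [l' E]]]. simpl in *. subst l.
    apply coset_rep_eq1 in C1. rewrite stable_act_cancel by auto.
    destruct V as [V1 [V2 _]].
    assert (Hr : coset_rep (negb b) (gmul (tconj b g0) g1) = g1).
    { rewrite coset_rep_mul; auto using assoc_tconj. }
    rewrite stable_act_extend.
    + simpl. rewrite Hr. gsimpl. rewrite tconjK. reflexivity.
    + intros [Q1 [g2 [l0 E]]]. simpl in E, Q1. rewrite Hr in Q1. subst.
      specialize (V2 eq_refl). destruct b; discriminate.
  - rewrite (stable_act_extend b (g0, l)) by auto. simpl.
    set (r := coset_rep b g0).
    assert (Hs : assoc (negb b) (tconj b (gmul g0 (ginv r)))).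
    { apply assoc_tconj, coset_rep_spec. }
    pose proof (stable_act_cancel (negb b) _ r l Hs) as E.
    rewrite Bool.negb_involutive in E. rewrite E, tconjK. gsimpl. reflexivity.
Qed.

Lemma stable_act_base b a x : assoc b a ->
  stable_act b (gmul a (fst x), snd x) =
  (gmul (tconj b a) (fst (stable_act b x)), snd (stable_act b x)).
Proof.
  intro Ha. destruct x as [g0 l]. simpl.
  assert (Er : coset_rep b (gmul a g0) = coset_rep b g0) by (apply coset_rep_mul; auto).
  destruct (classic (cancels b (g0, l))) as [C|C].
  - destruct C as [C1 [g1 [l' E]]]. simpl in *. subst l. apply coset_rep_eq1 in C1.
    rewrite !stable_act_cancel; auto using assocM. simpl. rewrite tconjM. gsimpl. reflexivity.
  - rewrite !stable_act_extend; auto.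
    + simpl. rewrite Er, !tconjM. gsimpl. reflexivity.
    + intros [Q1 Q2]. apply C. split; auto. simpl in *. rewrite <- Er. auto.
Qed.

Definition NF := {x : nf | nf_valid (snd x)}.

Definition SymNF : Group := Sym NF.

Definition stable_perm (b : bool) : SymNF.
Proof.
  refine (mkperm NF (fun x => exist _ (stable_act b (proj1_sig x)) (stable_act_valid b _ (proj2_sig x)))
    (fun x => exist _ (stable_act (negb b) (proj1_sig x)) (stable_act_valid (negb b) _ (proj2_sig x)))
    _ _); intro x; apply sig_eq; simpl.
  - rewrite <- (Bool.negb_involutive b) at 1. apply stable_act_inv, proj2_sig.
  - apply stable_act_inv, proj2_sig.
Defined.

Definition base_perm (g : G) : SymNF.
Proof.
  refine (mkperm NF (fun x => exist _ (gmul g (fst (proj1_sig x)), snd (proj1_sig x)) (proj2_sig x))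
    (fun x => exist _ (gmul (ginv g) (fst (proj1_sig x)), snd (proj1_sig x)) (proj2_sig x))
    _ _); intro x; apply sig_eq; simpl; gsimpl; destruct (proj1_sig x); reflexivity.
Defined.

Lemma base_permM x y : base_perm (gmul x y) = gmul (base_perm x) (base_perm y).
Proof. apply perm_ext. intro z. apply sig_eq. simpl. rewrite gmul_assoc. reflexivity. Qed.

Lemma base_perm1 : base_perm gone = gone.
Proof. apply (hom1 G SymNF base_perm base_permM). Qed.

Lemma base_permV x : base_perm (ginv x) = ginv (base_perm x).
Proof. apply (homV G SymNF base_perm base_permM). Qed.

Lemma stable_perm_conj b a : assoc b a ->
  gmul (stable_perm b) (base_perm a) = gmul (base_perm (tconj b a)) (stable_perm b).
Proof.
  intro Ha. apply perm_ext. intro z. apply sig_eq. simpl.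
  rewrite stable_act_base by auto. destruct (stable_act b (proj1_sig z)); reflexivity.
Qed.

Lemma stable_perm_inv : ginv (stable_perm false) = stable_perm true.
Proof. apply perm_ext. reflexivity. Qed.

End HNNNormalForms.

(** * Ping-pong on normal forms *)

Section PingPong.
Variable G : Group.
Variable t : G.
Variable A : G -> Prop.
Hypothesis A1 : A gone.
Hypothesis AM : forall x y, A x -> A y -> A (gmul x y).
Hypothesis AV : forall x, A x -> A (ginv x).
Variables p q : G.
Hypothesis Hp : ~ assoc G t A true p.
Hypothesis Hq : ~ assoc G t A false q.

Local Notation assoc := (assoc G t A).
Local Notation stable_act := (stable_act G t A).

(* A letter class [(b, inv)] stands for the free generator [b] or its inverse, where generator
   [false] acts as [p T] and generator [true] as [q T^-1]. *)
Definition pp_base (c : bool) : G := if c then q else p.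

Lemma pp_base_not_assoc c : ~ assoc (negb c) (pp_base c).
Proof. destruct c; assumption. Qed.

Definition head_sign (l : list (bool * G)) (b : bool) : Prop := exists g1 l', l = (b, g1) :: l'.

Definition pp_act (c : bool * bool) (x : nf G) : nf G :=
  let (b, inv) := c in
  if inv then stable_act (negb b) (gmul (ginv (pp_base b)) (fst x), snd x)
  else (gmul (pp_base b) (fst (stable_act b x)), snd (stable_act b x)).

Definition pp_set (c : bool * bool) (x : nf G) : Prop :=
  let (b, inv) := c in
  if inv then head_sign (snd x) (negb b) /\ assoc b (fst x)
  else head_sign (snd x) b /\ assoc (negb b) (gmul (ginv (pp_base b)) (fst x)).

Lemma cancelsE b x : cancels G t A b x -> head_sign (snd x) (negb b) /\ assoc b (fst x).
Proof. intros [C1 C2]. split; [exact C2 | apply coset_rep_eq1; auto]. Qed.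

Lemma stable_act_extend_sign b x : ~ cancels G t A b x ->
  head_sign (snd (stable_act b x)) b /\ assoc (negb b) (fst (stable_act b x)).
Proof.
  intro C. rewrite stable_act_extend by auto. simpl. split; [do 2 eexists; reflexivity|].
  apply assoc_tconj, coset_rep_spec; auto.
Qed.

Lemma head_sign_uniq l b b' : head_sign l b -> head_sign l b' -> b = b'.
Proof. intros [g1 [l1 ->]] [g2 [l2 E]]. congruence. Qed.

Lemma pp_ldiv_not_assoc c x : assoc (negb c) x -> ~ assoc (negb c) (gmul (ginv (pp_base c)) x).
Proof. intros Hx Hcx. apply (pp_base_not_assoc c), (assoc_of_ldiv _ _ _ AM AV _ x); auto. Qed.

Lemma pp_act_lands c c' x :
  snd x = [] \/ (pp_set c' x /\ c' <> (fst c, negb (snd c))) -> pp_set c (pp_act c x).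
Proof.
  intro Hx. assert (Hnil : forall b, head_sign (snd x) b -> snd x <> []).
  { intros b [g1 [l1 E]]. rewrite E. discriminate. }
  destruct c as [b []]; simpl.
  - set (y := (gmul (ginv (pp_base b)) (fst x), snd x)).
    assert (C : ~ cancels G t A (negb b) y).
    { intro C. apply cancelsE in C as [Cs Ca]. rewrite Bool.negb_involutive in Cs. simpl in *.
      destruct Hx as [E|[HX Hne]]; [exact (Hnil _ Cs E)|].
      destruct c' as [b' []]; destruct HX as [Hs Ha]; pose proof (head_sign_uniq _ _ _ Hs Cs) as Eb.
      - assert (Eb' : b' = negb b) by (destruct b, b'; simpl in *; congruence).
        rewrite Eb' in Ha. exact (pp_ldiv_not_assoc b _ Ha Ca).
      - apply Hne. congruence. }
    destruct (stable_act_extend_sign _ y C) as [S1 S2]. rewrite Bool.negb_involutive in S2. auto.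
  - assert (C : ~ cancels G t A b x).
    { intro C. apply cancelsE in C as [Cs Ca].
      destruct Hx as [E|[HX Hne]]; [exact (Hnil _ Cs E)|].
      destruct c' as [b' []]; destruct HX as [Hs Ha]; pose proof (head_sign_uniq _ _ _ Hs Cs) as Eb.
      - apply Hne. destruct b, b'; simpl in *; congruence.
      - subst b'. apply (pp_ldiv_not_assoc (negb b) (fst x));
          [rewrite Bool.negb_involutive|]; assumption. }
    destruct (stable_act_extend_sign _ x C) as [S1 S2]. simpl. rewrite gmulKV. auto.
Qed.

Definition pp_gens (k : nat) : SymNF G t A :=
  if Nat.eqb k 0 then gmul (base_perm G t A p) (stable_perm G t A A1 AM AV false)
  else gmul (base_perm G t A q) (stable_perm G t A A1 AM AV true).

Definition letter_class (l : letter) : bool * bool := (negb (Nat.eqb (fst l) 0), snd l).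

Lemma letter_class_inv l l' : (fst l < 2)%nat -> (fst l' < 2)%nat ->
  letter_class l' = (fst (letter_class l), negb (snd (letter_class l))) -> l' = letter_inv l.
Proof.
  destruct l as [k b], l' as [k' b']; unfold letter_class, letter_inv; simpl. intros H1 H2 E.
  inversion E. f_equal. destruct k as [|[|]], k' as [|[|]]; simpl in *; try lia; discriminate.
Qed.

Lemma pp_gens_lval l y : proj1_sig (pf (lval pp_gens l) y) = pp_act (letter_class l) (proj1_sig y).
Proof.
  destruct l as [k []]; unfold pp_gens, lval, letter_class; simpl;
    destruct (Nat.eqb k 0); reflexivity.
Qed.

Definition nf_origin : NF G t A := exist _ (gone, []) I.

Lemma pp_word_lands l W : word_on 2 (l :: W) -> reduced (l :: W) ->
  pp_set (letter_class l) (proj1_sig (pf (eval_word pp_gens (l :: W)) nf_origin)).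
Proof.
  revert l. induction W as [|l' W IH]; intros l Hon Hred;
    rewrite eval_cons, Sym_pf_mul, pp_gens_lval.
  - apply (pp_act_lands _ (false, false)). left. reflexivity.
  - apply (pp_act_lands _ (letter_class l')). right.
    destruct Hred as [Hll' Hred]. apply word_on_consE in Hon as [Hl Hon].
    split; [apply IH; auto|].
    intro Hc. apply Hll', letter_class_inv; auto. exact (proj1 (word_on_consE _ _ _ Hon)).
Qed.

Lemma pingpong W : word_on 2 W -> reduced W -> W <> [] -> eval_word pp_gens W <> gone.
Proof.
  destruct W as [|l W]; [congruence|]. intros Hon Hred _ E.
  pose proof (pp_word_lands l W Hon Hred) as H. rewrite E in H.
  destruct (letter_class l) as [b []]; destruct H as [[g1 [l1 E']] _]; discriminate.
Qed.

End PingPong.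

(** * From no free subgroup to bounded rank of the G_i *)

Section StableLetter.
Variable G : Group.
Variable n : nat.
Variable g : nat -> G.
Variable phi : G -> Z.
Hypothesis phiM : forall x y, phi (gmul x y) = phi x + phi y.
Variable t : G.
Hypothesis Ht : phi t = 1.
Variable K : Z.
Hypothesis K0 : 0 <= K.

Definition phi_gen (j : nat) : Z := phi (g j).
Definition ker_gen (j : nat) : G := gmul (g j) (zpow t (- phi_gen j)).
Definition conjt (k : Z) (y : G) : G := gmul (gmul (zpow t k) y) (zpow t (- k)).

Lemma conjt0 y : conjt 0 y = y.
Proof. unfold conjt. simpl. rewrite zpow0. gsimpl. reflexivity. Qed.

Lemma conjt_add k l y : conjt (k + l) y = conjt k (conjt l y).
Proof. unfold conjt. rewrite !zpow_opp, !zpow_add. gsimpl. reflexivity. Qed.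

Lemma conjtV k y : conjt k (ginv y) = ginv (conjt k y).
Proof. unfold conjt. rewrite zpow_opp. gsimpl. reflexivity. Qed.

Lemma conjt1 y : conjt 1 y = tconj G t false y.
Proof. unfold conjt, tconj. rewrite zpow_opp, zpow1. reflexivity. Qed.

Lemma conjtN1 y : conjt (-1) y = tconj G t true y.
Proof.
  unfold conjt, tconj. change (-1) with (- (1)).
  rewrite Z.opp_involutive, zpow_opp, zpow1. reflexivity.
Qed.

Definition Awin : G -> Prop :=
  gen (fun y => exists j k, (j < n)%nat /\ -K <= k < K /\ y = conjt k (ker_gen j)).
Definition Bwin : G -> Prop :=
  gen (fun y => exists j k, (j < n)%nat /\ -K <= k <= K /\ y = conjt k (ker_gen j)).

Lemma Awin1 : Awin gone. Proof. constructor. Qed.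
Lemma AwinM x y : Awin x -> Awin y -> Awin (gmul x y). Proof. apply gen_mul. Qed.
Lemma AwinV x : Awin x -> Awin (ginv x). Proof. apply gen_inv. Qed.

Lemma Awin_conjt j k : (j < n)%nat -> -K <= k < K -> Awin (conjt k (ker_gen j)).
Proof. intros. apply gen_incl. exists j, k. auto. Qed.

Lemma Awin_Bwin y : Awin y -> Bwin y.
Proof.
  apply gen_sub. intros z [j [k [Hj [Hk ->]]]]. apply gen_incl. exists j, k. repeat split; auto; lia.
Qed.

Lemma Awin_conjt1_Bwin y : Awin y -> Bwin (conjt 1 y).
Proof.
  intro Hy. rewrite conjt1. apply (gen_conj G _ t y) in Hy.
  revert Hy. apply gen_sub. intros z [s [[j [k [Hj [Hk ->]]]] ->]].
  apply gen_incl. exists j, (k + 1). repeat split; auto; try lia.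
  rewrite Z.add_comm, conjt_add, conjt1. reflexivity.
Qed.

Local Notation HG := (SymNF G t Awin).
Local Notation T := (stable_perm G t Awin Awin1 AwinM AwinV false).
Local Notation L := (base_perm G t Awin).

Lemma T_conj_up y : Awin y -> gmul T (L y) = gmul (L (conjt 1 y)) T.
Proof. intro. rewrite conjt1. apply stable_perm_conj. assumption. Qed.

Lemma T_conj_down y : Awin (conjt (-1) y) -> gmul (ginv T) (L y) = gmul (L (conjt (-1) y)) (ginv T).
Proof.
  rewrite stable_perm_inv, conjtN1. intro H. apply stable_perm_conj. exact H.
Qed.

Lemma T_pow_conj y : (forall k, -K <= k < K -> Awin (conjt k y)) ->
  forall s, -K <= s <= K -> gmul (zpow T s) (L y) = gmul (L (conjt s y)) (zpow T s).
Proof.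
  intros HA.
  assert (Hm : forall m : nat, Z.of_nat m <= K ->
     gmul (zpow T (Z.of_nat m)) (L y) = gmul (L (conjt (Z.of_nat m) y)) (zpow T (Z.of_nat m)) /\
     gmul (zpow T (- Z.of_nat m)) (L y) = gmul (L (conjt (- Z.of_nat m) y)) (zpow T (- Z.of_nat m))).
  { induction m as [|m IH]; intros Hm.
    - simpl. rewrite zpow0, conjt0. gsimpl. auto.
    - destruct IH as [Iup Idown]; [lia|]. rewrite Nat2Z.inj_succ. unfold Z.succ. split.
      + rewrite zpow_succ, <- gmul_assoc, Iup, gmul_assoc, T_conj_up by (apply HA; lia).
        rewrite <- gmul_assoc, <- conjt_add, (Z.add_comm 1). reflexivity.
      + replace (- (Z.of_nat m + 1)) with (- Z.of_nat m - 1) by lia.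
        rewrite zpow_pred, <- gmul_assoc, Idown, gmul_assoc, T_conj_down.
        * rewrite <- gmul_assoc, <- conjt_add. do 3 f_equal. lia.
        * rewrite <- conjt_add. apply HA. lia. }
  intros s Hs. destruct (Z_le_gt_dec 0 s).
  - replace s with (Z.of_nat (Z.to_nat s)) by lia. apply Hm; lia.
  - replace s with (- Z.of_nat (Z.to_nat (- s))) by lia. apply Hm; lia.
Qed.

Definition sigma (j : nat) : HG := gmul (L (ker_gen j)) (zpow T (phi_gen j)).

Fixpoint phi_variation (w : word) : Z :=
  match w with [] => 0 | l :: w' => Z.abs (phi (lval g l)) + phi_variation w' end.

Lemma wspread_nonneg w : 0 <= phi_variation w.
Proof. induction w; simpl; lia. Qed.

Lemma sigma_window_letter l s : (fst l < n)%nat -> -K <= s <= K -> -K <= s + phi (lval g l) <= K ->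
  gmul (zpow T s) (lval sigma l) =
  gmul (L (gmul (gmul (zpow t s) (lval g l)) (zpow t (- (s + phi (lval g l))))))
       (zpow T (s + phi (lval g l))).
Proof.
  destruct l as [j []]; unfold lval, sigma; cbn [fst snd]; intros Hj Hs Hsl.
  - rewrite (phiV G phi phiM) in *. fold (phi_gen j) in *.
    rewrite ginv_mul, <- base_permV, <- zpow_opp, gmul_assoc, <- zpow_add, T_pow_conj; auto.
    + f_equal. f_equal. unfold conjt, ker_gen. rewrite ?zpow_opp, ?zpow_add, ?zpow_opp. gsimpl. reflexivity.
    + intros k Hk. rewrite conjtV. apply AwinV, Awin_conjt; auto.
  - fold (phi_gen j) in *.
    rewrite gmul_assoc, T_pow_conj, <- gmul_assoc, <- zpow_add; auto using Awin_conjt.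
    f_equal. f_equal. unfold conjt, ker_gen. rewrite ?zpow_opp, ?zpow_add, ?zpow_opp. gsimpl. reflexivity.
Qed.

Lemma sigma_window w s : word_on n w -> Z.abs s + phi_variation w <= K ->
  gmul (zpow T s) (eval_word sigma w) =
  gmul (L (gmul (gmul (zpow t s) (eval_word g w)) (zpow t (- (s + phi (eval_word g w))))))
       (zpow T (s + phi (eval_word g w))).
Proof.
  revert s. induction w as [|l w IH]; intros s Hon Hs.
  - simpl. rewrite (phi1 G phi phiM), Z.add_0_r, zpow_opp. gsimpl. rewrite base_perm1. gsimpl. reflexivity.
  - apply word_on_consE in Hon as [Hl Hon]. simpl in Hs. pose proof (wspread_nonneg w).
    rewrite !eval_cons, gmul_assoc, sigma_window_letter by (auto; lia).
    rewrite <- gmul_assoc, IH, gmul_assoc, <- base_permM, phiM, Z.add_assoc by (auto; lia).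
    f_equal. f_equal. rewrite !zpow_opp. gsimpl. reflexivity.
Qed.

Variable R : list word.
Hypothesis HRon : forall r, In r R -> word_on n r.
Hypothesis Hrel : forall r, In r R -> eval_word g r = gone.
Hypothesis Hpres : forall w, word_on n w -> eval_word g w = gone -> pres_equiv R w [].
Hypothesis HKR : forall r, In r R -> phi_variation r <= K.
Variable wt : word.
Hypothesis Hwt_on : word_on n wt.
Hypothesis Hwt : eval_word g wt = t.
Hypothesis HKt : phi_variation wt <= K.

Lemma sigma_relator r : In r R -> eval_word sigma r = gone.
Proof.
  intro Hr. pose proof (HKR r Hr) as HK.
  pose proof (sigma_window r 0 (HRon r Hr) ltac:(simpl; lia)) as W.
  rewrite (Hrel r Hr), (phi1 G phi phiM), Z.add_0_l, Z.opp_0, !zpow0 in W.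
  gsimpl_in W. rewrite base_perm1 in W. gsimpl_in W. exact W.
Qed.

Lemma sigma_t : eval_word sigma wt = T.
Proof.
  pose proof (sigma_window wt 0 Hwt_on ltac:(simpl; lia)) as W.
  rewrite Hwt, Ht, Z.add_0_l, !zpow0, zpow_opp, !zpow1 in W.
  gsimpl_in W. rewrite base_perm1 in W. gsimpl_in W. exact W.
Qed.

Lemma sigma_transfer u v : word_on n u -> word_on n v ->
  eval_word g u = eval_word g v -> eval_word sigma u = eval_word sigma v.
Proof. apply (presentation_transfer G HG g sigma n R Hpres sigma_relator). Qed.

Definition sigma_lifts (y : G) : Prop :=
  exists u, word_on n u /\ eval_word g u = y /\ eval_word sigma u = L y.

Lemma sigma_lifts_mul x y : sigma_lifts x -> sigma_lifts y -> sigma_lifts (gmul x y).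
Proof.
  intros [u [Ou [Eu Fu]]] [v [Ov [Ev Fv]]]. exists (u ++ v).
  split; [apply word_on_app; auto|]. rewrite !eval_app, base_permM. split; congruence.
Qed.

Lemma sigma_lifts_inv x : sigma_lifts x -> sigma_lifts (ginv x).
Proof.
  intros [u [Ou [Eu Fu]]]. exists (word_inv u).
  split; [apply word_on_inv; auto|]. rewrite !eval_inv, base_permV. split; congruence.
Qed.

Lemma sigma_lifts_conjt_ker_gen j k :
  (j < n)%nat -> -K <= k <= K -> sigma_lifts (conjt k (ker_gen j)).
Proof.
  intros Hj Hk. exists (wpow wt k ++ ((j, false) :: wpow wt (- phi_gen j)) ++ wpow wt (- k)).
  split; [|split].
  - repeat apply word_on_app; try apply word_on_cons; auto using word_on_wpow.
  - rewrite !eval_app, eval_cons, !eval_wpow, Hwt. unfold conjt, ker_gen, lval. cbn [fst snd].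
    gsimpl. reflexivity.
  - rewrite !eval_app, eval_cons, !eval_wpow, sigma_t. unfold lval, sigma. cbn [fst snd].
    rewrite !zpow_opp. gsimpl.
    rewrite gmul_assoc, T_pow_conj by auto using Awin_conjt. gsimpl. reflexivity.
Qed.

Lemma sigma_lifts_Bwin y : Bwin y -> sigma_lifts y.
Proof.
  induction 1 as [|s x [j [k [Hj [Hk ->]]]] _ IH|s x [j [k [Hj [Hk ->]]]] _ IH].
  - exists []. split; [apply word_on_nil|]. split; [reflexivity|]. symmetry. apply base_perm1.
  - apply sigma_lifts_mul; auto using sigma_lifts_conjt_ker_gen.
  - apply sigma_lifts_mul; auto using sigma_lifts_inv, sigma_lifts_conjt_ker_gen.
Qed.

(* [p t] and [q t^-1] are mapped by [sigma] to the ping-pong generators [L p T] and [L q T^-1]. *)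
Lemma contains_F2_of_escape p q :
  Bwin p -> ~ assoc G t Awin true p -> Bwin q -> ~ assoc G t Awin false q -> contains_F2 G.
Proof.
  intros Bp Hp Bq Hq.
  destruct (sigma_lifts_Bwin p Bp) as [up [Op [Ep Fp]]].
  destruct (sigma_lifts_Bwin q Bq) as [uq [Oq [Eq Fq]]].
  set (u := fun k => if Nat.eqb k 0 then up ++ wt else uq ++ word_inv wt).
  set (ab := fun k => if Nat.eqb k 0 then gmul p t else gmul q (ginv t)).
  assert (Ou : forall k, word_on n (u k)).
  { intro k. unfold u. destruct (Nat.eqb k 0); apply word_on_app; auto using word_on_inv. }
  assert (Eg : forall k, eval_word g (u k) = ab k).
  { intro k. unfold u, ab. destruct (Nat.eqb k 0); rewrite eval_app, ?eval_inv; congruence. }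
  assert (Es : forall k, eval_word sigma (u k) = pp_gens G t Awin Awin1 AwinM AwinV p q k).
  { intro k. unfold u, pp_gens. rewrite <- stable_perm_inv.
    destruct (Nat.eqb k 0); rewrite eval_app, ?eval_inv, sigma_t; congruence. }
  exists (gmul p t), (gmul q (ginv t)). intros W Won Wred Wne E.
  apply (pingpong G t Awin Awin1 AwinM AwinV p q Hp Hq W Won Wred Wne).
  rewrite <- (eval_ext _ _ _ W Es), <- eval_wsubst.
  apply (sigma_transfer _ []); auto using word_on_wsubst, word_on_nil.
  rewrite eval_wsubst, (eval_ext _ _ ab W Eg). exact E.
Qed.

Hypothesis nF2 : ~ contains_F2 G.

Lemma Bwin_conjt_stable : exists d, (d = 1 \/ d = -1) /\ forall y, Bwin y -> Bwin (conjt d y).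
Proof.
  destruct (classic (forall y, Bwin y -> Awin y)) as [HA|HA].
  { exists 1. split; auto. intros y By. apply Awin_conjt1_Bwin, HA, By. }
  destruct (classic (forall y, Bwin y -> assoc G t Awin true y)) as [HC|HC].
  { exists (-1). split; auto. intros y By. apply Awin_Bwin.
    rewrite conjtN1. apply (HC y By). }
  exfalso. apply nF2.
  apply not_all_ex_not in HA as [q Hq]. apply imply_to_and in Hq as [Bq Hq].
  apply not_all_ex_not in HC as [p Hp]. apply imply_to_and in Hp as [Bp Hp].
  apply (contains_F2_of_escape p q); auto.
Qed.

Definition KerSpan : G -> Prop := gen (fun y => exists s j, (j < n)%nat /\ y = conjt s (ker_gen j)).

Lemma ker_span_conjt s z : KerSpan z -> KerSpan (conjt s z).
Proof.
  intro Hz. unfold conjt. rewrite zpow_opp. apply (gen_conj G _ (zpow t s)) in Hz.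
  revert Hz. apply gen_sub. intros y [w [[s' [j [Hj ->]]] ->]]. apply gen_incl.
  exists (s + s'), j. split; auto. rewrite conjt_add. unfold conjt. rewrite !zpow_opp. reflexivity.
Qed.

Lemma ker_span_letter l : (fst l < n)%nat -> KerSpan (gmul (lval g l) (zpow t (- phi (lval g l)))).
Proof.
  destruct l as [j []]; unfold lval; cbn [fst snd]; intro Hj.
  - replace (gmul (ginv (g j)) (zpow t (- phi (ginv (g j)))))
      with (conjt (- phi_gen j) (ginv (ker_gen j))).
    + apply ker_span_conjt, gen_inv, gen_incl. exists 0, j. rewrite conjt0. auto.
    + rewrite (phiV G phi phiM), Z.opp_involutive. unfold conjt, ker_gen, phi_gen.
      rewrite Z.opp_involutive, !zpow_opp. gsimpl. reflexivity.
  - apply gen_incl. exists 0, j. rewrite conjt0. auto.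
Qed.

Lemma ker_span_eval_word w :
  word_on n w -> KerSpan (gmul (eval_word g w) (zpow t (- phi (eval_word g w)))).
Proof.
  induction w as [|l w IH]; intro Hon.
  - simpl. rewrite (phi1 G phi phiM), zpow0, gmul_1l. constructor.
  - apply word_on_consE in Hon as [Hl Hon].
    replace (gmul (eval_word g (l :: w)) (zpow t (- phi (eval_word g (l :: w)))))
      with (gmul (gmul (lval g l) (zpow t (- phi (lval g l))))
                 (conjt (phi (lval g l)) (gmul (eval_word g w) (zpow t (- phi (eval_word g w)))))).
    + apply gen_mul; [apply ker_span_letter | apply ker_span_conjt, IH]; auto.
    + rewrite eval_cons, phiM. unfold conjt. rewrite Z.opp_add_distr, Z.add_comm, zpow_add, !zpow_opp.
      gsimpl. reflexivity.
Qed.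

Definition Bwin_list : list G :=
  flat_map (fun j => map (fun m => conjt (Z.of_nat m - K) (ker_gen j))
                         (seq 0 (Z.to_nat (2 * K + 1))))
           (seq 0 n).

Lemma Bwin_list_length : length Bwin_list = (n * Z.to_nat (2 * K + 1))%nat.
Proof.
  unfold Bwin_list. rewrite (flat_map_constant_length (c := Z.to_nat (2 * K + 1))), length_seq; auto.
  intros j _. rewrite length_map, length_seq. reflexivity.
Qed.

Lemma Bwin_list_spec j k : (j < n)%nat -> -K <= k <= K -> In (conjt k (ker_gen j)) Bwin_list.
Proof.
  intros Hj Hk. unfold Bwin_list. apply in_flat_map. exists j. split; [apply in_seq; lia|].
  apply in_map_iff. exists (Z.to_nat (k + K)). split; [f_equal; lia | apply in_seq; lia].
Qed.

Hypothesis Hgen : forall x : G, exists w, word_on n w /\ eval_word g w = x.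

Section RankBound.
Variable d : Z.
Hypothesis Hd : d = 1 \/ d = -1.
Hypothesis HdB : forall y, Bwin y -> Bwin (conjt d y).
Variable i : nat.
Hypothesis Hi : (1 <= i)%nat.

Definition Gi_list : list G := zpow t (Z.of_nat i) :: Bwin_list.

Local Notation GL := (gen (fun y => In y Gi_list)).

Lemma Bwin_conjt_mul y m : Bwin y -> Bwin (conjt (d * Z.of_nat m) y).
Proof.
  intro By. induction m.
  - rewrite Z.mul_0_r, conjt0. auto.
  - rewrite Nat2Z.inj_succ, Z.mul_succ_r, Z.add_comm, conjt_add. auto.
Qed.

Lemma GL_Bwin y : Bwin y -> GL y.
Proof.
  apply gen_sub. intros z [j [k [Hj [Hk ->]]]]. apply gen_incl. right. apply Bwin_list_spec; auto.
Qed.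

Lemma GL_tpow q : GL (zpow (zpow t (Z.of_nat i)) q).
Proof. apply gen_zpow, gen_incl. left. reflexivity. Qed.

(* Writing [s = i c + d m] with [0 <= m < i], [conjt s (ker_gen j)] is the element
   [conjt (d m) (ker_gen j)] of [Bwin] conjugated by [(t^i)^c]. *)
Lemma GL_conjt_ker_gen s j : (j < n)%nat -> GL (conjt s (ker_gen j)).
Proof.
  intro Hj. set (I := Z.of_nat i). assert (HI : 0 < I) by (unfold I; lia).
  set (m := (d * s) mod I). set (c := d * ((d * s) / I)).
  assert (Hm : 0 <= m) by (apply Z.mod_pos_bound; auto).
  assert (Es : s = I * c + d * Z.of_nat (Z.to_nat m)).
  { rewrite Z2Nat.id by auto. unfold c, m.
    pose proof (Z.div_mod (d * s) I ltac:(lia)). destruct Hd; subst d; lia. }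
  assert (HB : Bwin (conjt (d * Z.of_nat (Z.to_nat m)) (ker_gen j))).
  { apply Bwin_conjt_mul, gen_incl. exists j, 0. rewrite conjt0. repeat split; auto; lia. }
  rewrite Es, conjt_add. apply GL_Bwin in HB.
  revert HB. generalize (conjt (d * Z.of_nat (Z.to_nat m)) (ker_gen j)). intros z Hz. unfold conjt. rewrite zpow_opp, zpow_mul.
  apply gen_mul; [apply gen_mul|apply gen_inv]; auto using GL_tpow.
Qed.

Lemma GL_Gi x : Gi G phi i x -> GL x.
Proof.
  intros [c Hc]. destruct (Hgen x) as [w [Ow <-]].
  replace (eval_word g w)
    with (gmul (gmul (eval_word g w) (zpow t (- phi (eval_word g w)))) (zpow (zpow t (Z.of_nat i)) c)).
  - apply gen_mul; [|apply GL_tpow].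
    generalize (ker_span_eval_word w Ow). apply gen_sub.
    intros y [s [j [Hj ->]]]. apply GL_conjt_ker_gen; auto.
  - rewrite <- zpow_mul, Z.mul_comm, <- Hc, zpow_opp. gsimpl. reflexivity.
Qed.

Lemma Gi_rank_le : rank_le G (Gi G phi i) (S (n * Z.to_nat (2 * K + 1))).
Proof.
  exists Gi_list. split; [|split].
  - cbn [Gi_list length]. rewrite Bwin_list_length. lia.
  - intros y [<-|Hy]; unfold Gi.
    + rewrite (phi_zpow G phi phiM), Ht. exists 1. lia.
    + unfold Bwin_list in Hy. apply in_flat_map in Hy as [j [_ Hy]]. apply in_map_iff in Hy as [m [<- _]].
      unfold conjt, ker_gen. rewrite !phiM, !(phi_zpow G phi phiM), Ht. exists 0. unfold phi_gen. lia.
  - intros x Hx. apply gen_list_word, GL_Gi, Hx.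
Qed.

End RankBound.

Lemma Gi_rank_bounded i : (1 <= i)%nat -> rank_le G (Gi G phi i) (S (n * Z.to_nat (2 * K + 1))).
Proof. destruct Bwin_conjt_stable as [d [Hd HdB]]. apply (Gi_rank_le d Hd HdB). Qed.

End StableLetter.

(** * The rank gradient *)

Close Scope Z_scope.

Lemma rank_gradient_zero_of_bounded (G : Group) (phi : G -> Z) (M : nat) :
  (forall i, (1 <= i)%nat -> rank_le G (Gi G phi i) M) -> rank_gradient_zero G phi.
Proof.
  intros HM eps N Heps.
  set (x := (INR M / eps)%R).
  destruct (archimed x) as [Hup _].
  assert (Hx0 : (0 <= x)%R).
  { apply Rmult_le_pos; [apply pos_INR | left; apply Rinv_0_lt_compat; lra]. }
  assert (Hz : (0 < up x)%Z) by (apply lt_0_IZR; lra).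
  set (i := Nat.max (Nat.max N 1) (Z.to_nat (up x))).
  assert (Hi : (IZR (up x) <= INR i)%R).
  { rewrite <- (Z2Nat.id (up x)), <- INR_IZR_INZ by lia. apply le_INR. unfold i. lia. }
  exists i, M. repeat split; try (unfold i; lia).
  - apply HM. unfold i. lia.
  - replace (INR M) with (eps * x)%R by (unfold x; field; lra).
    apply Rmult_lt_compat_l; lra.
Qed.

Lemma list_upper_bound {T} (f : T -> Z) (l : list T) :
  exists K, (0 <= K)%Z /\ forall x, In x l -> (f x <= K)%Z.
Proof.
  induction l as [|y l [K [K0 HK]]].
  - exists 0%Z. split; [lia | intros x []].
  - exists (Z.max K (f y)). split; [lia|]. intros x [<-|Hx]; [|specialize (HK x Hx)]; lia.
Qed.

Theorem lemma3p2 (G : Group) :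
  finitely_presented G -> ~ contains_F2 G ->
  forall phi : G -> Z, primitive_class G phi -> rank_gradient_zero G phi.
Proof.
  intros [n [g [R [HRon [Hgen [Hrel Hpres]]]]]] nF2 phi [phiM phiS].
  destruct (phiS 1%Z) as [t Ht]. destruct (Hgen t) as [wt [Hwt_on Hwt]].
  destruct (list_upper_bound (phi_variation G g phi) (wt :: R)) as [K [K0 HK]].
  apply (rank_gradient_zero_of_bounded G phi (S (n * Z.to_nat (2 * K + 1)))).
  apply (Gi_rank_bounded G n g phi phiM t Ht K K0 R HRon Hrel Hpres) with (wt := wt);
    auto; intros; apply HK; simpl; auto.
Qed.
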